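(* Let $q\ge 1$ and, for each $k\in\{1,\dots,q\}$, let $M_k\ge 2$ be an integer and $0=x_{k,0}<x_{k,1}<\dots<x_{k,M_k}=1$. Let data values $z_{(1,j_1)\cdots(q,j_q)}\in\mathbb{R}$ be given for all $(j_1,\dots,j_q)\in\prod_{k=1}^q\{0,1,\dots,M_k\}$. Let the maps $u_{k,i}$ and the function $\eta$ be as in the context, and for each $(i_1,\dots,i_q)\in\prod_{k=1}^q\{1,\dots,M_k\}$ let $F_{i_1\cdots i_q}:I^q\times\mathbb{R}\to\mathbb{R}$ be continuous and satisfy: (1) $F_{i_1\cdots i_q}\big(x_{1,k_1},\dots,x_{q,k_q},z_{(1,k_1)\cdots(q,k_q)}\big)=z_{(1,\eta(i_1,k_1))\cdots(q,\eta(i_q,k_q))}$ for all $(k_1,\dots,k_q)\in\prod_{j=1}^q\{0,M_j\}$; (2) there is $0<\gamma_{i_1\cdots i_q}<1$ with $|F_{i_1\cdots i_q}(x,z^* )-F_{i_1\cdots i_q}(x,z^{**})|\le\gamma_{i_1\cdots i_q}|z^*-z^{**}|$ for all $x\in I^q$, $z^*,z^{**}\in\mathbb{R}$; (3) (matching conditions) for every $k\in\{1,\dots,q\}$, every $i_k\in\{1,\dots,M_k-1\}$ and every choice of $i_j\in\{1,\dots,M_j\}$ for $j\ne k$, putting $x_k^*=u_{k,i_k}^{-1}(x_{k,i_k})=u_{k,i_k+1}^{-1}(x_{k,i_k})$, one has $F_{i_1\cdots i_{k-1}\,i_k\,i_{k+1}\cdots i_q}(x_1,\dots,x_{k-1},x_k^*,x_{k+1},\dots,x_q,z)=F_{i_1\cdots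 i_{k-1}\,(i_k+1)\,i_{k+1}\cdots i_q}(x_1,\dots,x_{k-1},x_k^*,x_{k+1},\dots,x_q,z)$ for all $x_j\in I$ ($j\neq k$) and $z\in\mathbb{R}$. Define $\Omega_{i_1\cdots i_q}:I^q\times\mathbb{R}\to I^q\times\mathbb{R}$ by $\Omega_{i_1\cdots i_q}(x_1,\dots,x_q,z)=\big(u_{1,i_1}(x_1),\dots,u_{q,i_q}(x_q),F_{i_1\cdots i_q}(x_1,\dots,x_q,z)\big)$. Then there is a unique continuous function $\mathcal{A}:I^q\to\mathbb{R}$ whose graph $H=\{(x,\mathcal{A}(x)):x\in I^q\}$ satisfies $H=\bigcup_{(i_1,\dots,i_q)\in\prod_k\{1,\dots,M_k\}}\Omega_{i_1\cdots i_q}(H)$; moreover $\mathcal{A}(x_{1,j_1},\dots,x_{q,j_q})=z_{(1,j_1)\cdots(q,j_q)}$ for all $(j_1,\dots,j_q)\in\prod_{k=1}^q\{0,\dots,M_k\}$.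
   Context: $I=[0,1]$, $I^q$ is the $q$-fold Cartesian product. For $k\in\{1,\dots,q\}$ and $i\in\{1,\dots,M_k\}$, $I_{k,i}=[x_{k,i-1},x_{k,i}]$ and $u_{k,i}:I\to I_{k,i}$ is a homeomorphism onto $I_{k,i}$ which is a contraction ($|u_{k,i}(x)-u_{k,i}(y)|\le\mu_{k,i}|x-y|$ with $0<\mu_{k,i}<1$) and satisfies $u_{k,i}(0)=x_{k,i-1}$, $u_{k,i}(1)=x_{k,i}$ if $i$ is odd, and $u_{k,i}(0)=x_{k,i}$, $u_{k,i}(1)=x_{k,i-1}$ if $i$ is even. The function $\eta$ is defined on pairs $(i,e)$ with $i$ an integer and $e\in\{0,M_1,\dots,M_q\}$ by: if $i$ is odd, $\eta(i,0)=i-1$ and $\eta(i,M_j)=i$; if $i$ is even, $\eta(i,0)=i$ and $\eta(i,M_j)=i-1$. *)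

(* Stdlib reals R, with MathComp ordinals 'I_q as the index set {1..q}
   (shifted to {0..q-1}). Points of I^q are functions 'I_q -> R. *)
From Stdlib Require Import Reals.
From mathcomp Require Import all_boot.

Set Implicit Arguments.
Unset Strict Implicit.
Unset Printing Implicit Defensive.

Local Open Scope R_scope.

Definition inI (t : R) : Prop := 0 <= t <= 1.

Definition inIq (q : nat) (x : 'I_q -> R) : Prop := forall k, inI (x k).

Definition upd (q : nat) (x : 'I_q -> R) (k : 'I_q) (t : R) : 'I_q -> R :=
  fun j => if j == k then t else x j.

Definition updn (q : nat) (i : 'I_q -> nat) (k : 'I_q) (n : nat) : 'I_q -> nat :=
  fun j => if j == k then n else i j.

Definition cont_on_interval (f : R -> R) (a b : R) : Prop :=
  forall s, a <= s <= b -> forall eps, 0 < eps -> exists delta, 0 < delta /\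
    forall t, a <= t <= b -> Rabs (t - s) < delta -> Rabs (f t - f s) < eps.

Definition cont_Iq (q : nat) (A : ('I_q -> R) -> R) : Prop :=
  forall x, inIq x -> forall eps, 0 < eps -> exists delta, 0 < delta /\
    forall y, inIq y -> (forall k, Rabs (y k - x k) < delta) ->
      Rabs (A y - A x) < eps.

Definition cont_IqR (q : nat) (F : ('I_q -> R) -> R -> R) : Prop :=
  forall x z, inIq x -> forall eps, 0 < eps -> exists delta, 0 < delta /\
    forall y w, inIq y -> (forall k, Rabs (y k - x k) < delta) ->
      Rabs (w - z) < delta -> Rabs (F y w - F x z) < eps.

Definition homeo_onto (f : R -> R) (a b : R) : Prop :=
  cont_on_interval f 0 1 /\
  exists g : R -> R,
    (forall t, inI t -> a <= f t <= b /\ g (f t) = t) /\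
    (forall s, a <= s <= b -> inI (g s) /\ f (g s) = s) /\
    cont_on_interval g a b.

Definition contraction_on_I (f : R -> R) : Prop :=
  exists mu, 0 < mu < 1 /\
    forall s t, inI s -> inI t -> Rabs (f s - f t) <= mu * Rabs (s - t).

(* the function eta of the paper, for e in {0, M_1, ..., M_q} *)
Definition eta (i e : nat) : nat :=
  if odd i then (if e == 0%N then (i - 1)%N else i)
  else (if e == 0%N then i else (i - 1)%N).

Definition idx_range (q : nat) (M : 'I_q -> nat) (i : 'I_q -> nat) : Prop :=
  forall k, (1 <= i k <= M k)%N.

Definition grid (q : nat) (xg : 'I_q -> nat -> R) (j : 'I_q -> nat) : 'I_q -> R :=
  fun k => xg k (j k).

From Stdlib Require Import Reals Lra Classical ClassicalEpsilon FunctionalExtensionality.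
From mathcomp Require Import all_boot.

(* The function [A] is the fixed point of the Read-Bajraktarevic operator
   [(RB f)(u_i(x)) = F_i(x, f(x))].  This operator is well defined on the grid
   hyperplanes shared by adjacent cells: consecutive maps [u_(k,i)] and
   [u_(k,i+1)] reach their common grid point from the same preimage ([0] or [1],
   according to parity), where the matching conditions (3) glue the [F_i].  It
   maps continuous functions to continuous functions and is a contraction for
   the sup norm with constant [max gamma_i], so its iterates from [0] converge
   uniformly; boundedness of continuous functions on [I^q] gives uniqueness, and
   the vertex conditions (1) give interpolation. *)

Set Implicit Arguments.
Unset Strict Implicit.
Unset Printing Implicit Defensive.

Local Open Scope R_scope.

Lemma common_delta_seq (T : eqType) (P : T -> R -> Prop) (s : seq T) :
  (forall t d d', 0 < d' <= d -> P t d -> P t d') ->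
  (forall t, t \in s -> exists2 d, 0 < d & P t d) ->
  exists2 d, 0 < d & forall t, t \in s -> P t d.
Proof.
move=> P_dn; elim: s => [|a s IHs] Ps; first by exists 1; [lra | move=> t].
have [d1 d1_gt0 Pd1] := Ps a (mem_head _ _).
have [d2 d2_gt0 Pd2] : exists2 d, 0 < d & forall t, t \in s -> P t d.
  by apply: IHs => t ts; apply: Ps; rewrite in_cons ts orbT.
have dmin_gt0 := Rmin_pos _ _ d1_gt0 d2_gt0.
exists (Rmin d1 d2) => // t; rewrite in_cons => /orP[/eqP -> | ts].
  by apply: P_dn Pd1; split=> //; apply: Rmin_l.
by apply: P_dn (Pd2 t ts); split=> //; apply: Rmin_r.
Qed.

Lemma common_delta_fin (T : finType) (P : T -> R -> Prop) :
  (forall t d d', 0 < d' <= d -> P t d -> P t d') ->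
  (forall t, exists2 d, 0 < d & P t d) ->
  exists2 d, 0 < d & forall t, P t d.
Proof.
move=> P_dn Pt; have [d d_gt0 Pd] := @common_delta_seq _ P (enum T) P_dn (fun t _ => Pt t).
by exists d => // t; apply: Pd; rewrite mem_enum.
Qed.

Lemma common_delta_idx (q : nat) (M : 'I_q -> nat) (P : ('I_q -> nat) -> R -> Prop) :
  (forall i d d', 0 < d' <= d -> P i d -> P i d') ->
  (forall i, idx_range M i -> exists2 d, 0 < d & P i d) ->
  exists2 d, 0 < d & forall i, idx_range M i -> P i d.
Proof.
move=> P_dn Pi.
pose N := (\max_(k : 'I_q) M k).+1.
pose val_ff (phi : {ffun 'I_q -> 'I_N}) k := nat_of_ord (phi k).
have [d d_gt0 Pd] : exists2 d, 0 < d & forall phi,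
    idx_range M (val_ff phi) -> P (val_ff phi) d.
  apply: common_delta_fin.
  - by move=> phi d d' dd' Pphi /Pphi; apply: P_dn.
  - move=> phi; case: (classic (idx_range M (val_ff phi))) => [/Pi[d d_gt0 Pd] | Nphi].
      by exists d.
    by exists 1; [lra | move/Nphi].
exists d => // i Ri.
have Ei : i = val_ff [ffun k => inord (i k)].
  apply: functional_extensionality => k; rewrite /val_ff ffunE inordK //.
  by rewrite ltnS (leq_trans _ (leq_bigmax k)) //; case/andP: (Ri k).
by rewrite Ei in Ri *; apply: Pd.
Qed.

(* Proved by a supremum argument: the set of [s] with [G 0 s] reaches [1]. *)
Lemma local_chain_unit_interval (G : R -> R -> Prop) :
  (forall a b c, G a b -> G b c -> G a c) ->
  (forall t, inI t -> exists2 e, 0 < e &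
      forall a b, t - e < a -> a <= b -> b < t + e -> G a b) ->
  G 0 1.
Proof.
move=> G_trans G_loc.
pose S s := 0 <= s <= 1 /\ G 0 s.
have S0 : S 0.
  have [e e_gt0 Ge] := G_loc 0 ltac:(rewrite /inI; lra).
  by split; [lra | apply: Ge; lra].
have S_bnd : bound S by exists 1 => s [[]].
have [c [c_ub c_lub]] := completeness S S_bnd (ex_intro _ 0 S0).
have c_ge0 : 0 <= c by apply: c_ub S0.
have c_le1 : c <= 1 by apply: c_lub => s [[]].
have [e e_gt0 Ge] := G_loc c ltac:(rewrite /inI; lra).
have [s Ss cs] : exists2 s, S s & c - e < s.
  apply: NNPP => NS; have : c <= c - e; last lra.
  by apply: c_lub => s Ss; apply: Rnot_lt_le => cs; apply: NS; exists s.
have sc : s <= c by apply: c_ub.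
pose b := Rmin (c + e / 2) 1.
have b_lt : b < c + e by rewrite /b; have := Rmin_l (c + e / 2) 1; lra.
have b_ge : c <= b by rewrite /b; apply: Rmin_glb; lra.
have Gb : G 0 b by apply: G_trans (proj2 Ss) _; apply: Ge; lra.
have : b <= c by apply: c_ub; split=> //; split; [lra | apply: Rmin_r].
by move: Gb; rewrite /b /Rmin; case: Rle_dec => // _; lra.
Qed.

Lemma cont_Iq_bounded (q : nat) (h : ('I_q -> R) -> R) :
  cont_Iq h -> exists B, forall y, inIq y -> Rabs (h y) <= B.
Proof.
move=> h_cont.
(* bounded near [x] in the coordinates [>= m], the others ranging over [I] *)
pose bounded_near m x := exists2 d, 0 < d & exists B, forall y, inIq y ->
  (forall j : 'I_q, (m <= j)%N -> Rabs (y j - x j) < d) -> Rabs (h y) <= B.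
have bnd m : (m <= q)%N -> forall x, inIq x -> bounded_near m x.
  elim: m => [_ x Ix | m IHm m_lt x Ix].
    have [d [d_gt0 hd]] := h_cont x Ix 1 Rlt_0_1.
    exists d => //; exists (Rabs (h x) + 1) => y Iy yx.
    have := Rabs_triang_inv (h y) (h x); have := hd y Iy (fun k => yx k isT); lra.
  pose km := Ordinal m_lt.
  pose G a b := exists2 d, 0 < d & exists B, forall y, inIq y -> a <= y km <= b ->
    (forall j : 'I_q, (m.+1 <= j)%N -> Rabs (y j - x j) < d) -> Rabs (h y) <= B.
  suff [d d_gt0 [B hB]] : G 0 1.
    by exists d => //; exists B => y Iy; apply: hB; apply: Iy.
  apply: local_chain_unit_interval.
    move=> a b c [d1 d1_gt0 [B1 hB1]] [d2 d2_gt0 [B2 hB2]].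
    exists (Rmin d1 d2); first exact: Rmin_pos.
    exists (Rmax B1 B2) => y Iy yac yx.
    have dmin1 := Rmin_l d1 d2; have dmin2 := Rmin_r d1 d2.
    case: (Rle_dec (y km) b) => yb.
      apply: Rle_trans (Rmax_l B1 B2); apply: hB1 => // [|j /yx]; lra.
    apply: Rle_trans (Rmax_r B1 B2); apply: hB2 => // [|j /yx]; lra.
  move=> t It.
  have Ixt : inIq (upd x km t).
    by move=> j; rewrite /upd; case: (j == km).
  have [d d_gt0 [B hB]] := IHm (ltnW m_lt) _ Ixt.
  exists d => // a b ta ab bt; exists d => //; exists B => y Iy yab yx.
  apply: hB => // j mj; rewrite /upd; case: eqP => [-> | /eqP jkm].
    by apply: Rabs_def1; lra.
  apply: yx; rewrite ltn_neqAle mj andbT; apply: contra jkm => /eqP mj'.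
  by apply/eqP/val_inj; rewrite /= -mj'.
have [d _ [B hB]] := bnd q (leqnn q) (fun _ => 0) (fun _ => conj (Rle_refl 0) Rle_0_1).
by exists B => y Iy; apply: hB => // j; rewrite leqNgt ltn_ord.
Qed.

Lemma pow_mul_small (g C : R) : 0 <= g < 1 -> forall eps, 0 < eps ->
  exists N, forall n, (N <= n)%N -> g ^ n * C < eps.
Proof.
move=> g01 eps eps_gt0.
have C1_gt0 : 0 < Rabs C + 1 by have := Rabs_pos C; lra.
have [N gN] := pow_lt_1_zero g ltac:(rewrite Rabs_pos_eq; lra) (eps / (Rabs C + 1))
  (Rdiv_lt_0_compat _ _ eps_gt0 C1_gt0).
exists N => n /leP Nn; have gn_ge0 := pow_le g n (proj1 g01).
have := gN n Nn; rewrite Rabs_pos_eq // => gn.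
have : g ^ n * (Rabs C + 1) < eps.
  have <- : eps / (Rabs C + 1) * (Rabs C + 1) = eps by field; lra.
  exact: Rmult_lt_compat_r.
have := Rle_abs C; nra.
Qed.

Lemma Un_cv_dist_le (v : nat -> R) l a C m : Un_cv v l ->
  (forall n, (m <= n)%N -> Rabs (v n - a) <= C) -> Rabs (l - a) <= C.
Proof.
move=> v_l v_C; apply: Rnot_lt_le => lC.
have [N vN] := v_l (Rabs (l - a) - C) ltac:(lra).
have := vN (maxn N m) ltac:(apply/leP; exact: leq_maxl).
have := v_C (maxn N m) (leq_maxr _ _).
by rewrite /Rdist; move: (v (maxn N m)) => w; split_Rabs; lra.
Qed.

Lemma cont_Iq_unif_limit (q : nat) (f : nat -> ('I_q -> R) -> R) A :
  (forall n, cont_Iq (f n)) ->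
  (forall eps, 0 < eps -> exists n, forall y, inIq y -> Rabs (A y - f n y) < eps) ->
  cont_Iq A.
Proof.
move=> f_cont f_A y Iy eps eps_gt0.
have [n fn] := f_A (eps / 3) ltac:(lra).
have [d [d_gt0 fd]] := f_cont n y Iy (eps / 3) ltac:(lra).
exists d; split=> // y' Iy' y'y.
have := fd y' Iy' y'y; have := fn y Iy; have := fn y' Iy'.
by move: (A y) (A y') (f n y) (f n y') => a a' b b'; split_Rabs; lra.
Qed.

Section ContractionIteration.
Variables (X : Type) (D : X -> Prop) (T : (X -> R) -> X -> R) (g : R).
Hypothesis g01 : 0 <= g < 1.
Hypothesis T_contr : forall f1 f2 y, D y ->
  exists2 x, D x & Rabs (T f1 y - T f2 y) <= g * Rabs (f1 x - f2 x).

Lemma iter_succ_dist f0 B : (forall y, D y -> Rabs (T f0 y - f0 y) <= B) ->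
  forall n y, D y -> Rabs (iter n.+1 T f0 y - iter n T f0 y) <= g ^ n * B.
Proof.
move=> f0B; elim=> [|n IHn] y Dy; first by rewrite /= Rmult_1_l; apply: f0B.
have [x Dx Txy] := T_contr (iter n.+1 T f0) (iter n T f0) Dy.
apply: Rle_trans Txy _; rewrite /= Rmult_assoc.
by apply: Rmult_le_compat_l; [lra | apply: IHn].
Qed.

Lemma iter_dist f0 B : (forall y, D y -> Rabs (T f0 y - f0 y) <= B) ->
  forall m p y, D y ->
    Rabs (iter (m + p) T f0 y - iter m T f0 y) <= g ^ m * (B / (1 - g)).
Proof.
move=> f0B m p y Dy.
have B_ge0 : 0 <= B := Rle_trans _ _ _ (Rabs_pos _) (f0B y Dy).
have gmB_ge0 := Rmult_le_pos _ _ (pow_le g m (proj1 g01)) B_ge0.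
(* the geometric series bound, with the denominator cleared *)
suff : (1 - g) * Rabs (iter (m + p) T f0 y - iter m T f0 y) <= g ^ m * B * (1 - g ^ p).
  move=> H; apply: (Rmult_le_reg_l (1 - g)); first lra.
  have -> : (1 - g) * (g ^ m * (B / (1 - g))) = g ^ m * B by field; lra.
  by have := pow_le g p (proj1 g01); nra.
elim: p => [|p IHp]; first by rewrite addn0 Rminus_diag Rabs_R0 /=; lra.
have := iter_succ_dist f0B (m + p) Dy; rewrite addnS pow_add /=.
move: (iter (m + p) T f0 y) (iter m T f0 y) IHp => b c IHp step.
have := Rabs_triang (T (iter (m + p) T f0) y - b) (b - c).
have -> : T (iter (m + p) T f0) y - b + (b - c) = T (iter (m + p) T f0) y - c by ring.
by have := pow_le g p (proj1 g01); nra.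
Qed.

Lemma iter_fixed_point f0 B : (forall y, D y -> Rabs (T f0 y - f0 y) <= B) ->
  exists A, (forall y, D y -> A y = T A y) /\
    forall n y, D y -> Rabs (A y - iter n T f0 y) <= g ^ n * (B / (1 - g)).
Proof.
move=> f0B; set C := B / (1 - g).
have dist := iter_dist f0B.
pose A y := epsilon (inhabits 0) (Un_cv (fun n => iter n T f0 y)).
have A_lim y : D y -> Un_cv (fun n => iter n T f0 y) (A y).
  move=> Dy; apply: epsilon_spec.
  suff /R_complete[l] : Cauchy_crit (fun n => iter n T f0 y) by exists l.
  move=> eps eps_gt0; have [N gN] := pow_mul_small C g01 eps_gt0.
  exists N => n m /leP Nn /leP Nm; rewrite /Rdist.
  wlog mn : n m Nn Nm / (m <= n)%N.
    by move=> wlog; case: (leqP m n) => [|/ltnW] /wlog; rewrite // Rabs_minus_sym; apply.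
  by rewrite -(subnKC mn); apply: Rle_lt_trans (dist _ _ _ Dy) _; apply: gN.
have A_dist n y : D y -> Rabs (A y - iter n T f0 y) <= g ^ n * C.
  move=> Dy; apply: (Un_cv_dist_le (m := n) (A_lim y Dy)) => m nm.
  by rewrite -(subnKC nm); apply: dist.
exists A; split=> // y Dy; apply: cond_eq => eps eps_gt0.
have [N gN] := pow_mul_small C g01 (ltac:(lra) : 0 < eps / 2).
have [x Dx Txy] := T_contr A (iter N T f0) Dy.
have := A_dist N.+1 y Dy; have := A_dist N x Dx; rewrite /=.
have := gN N.+1 (leqnSn N); have := gN N (leqnn N); rewrite /=.
move: (A y) (T A y) (T (iter N T f0) y) (A x - iter N T f0 x) Txy => a b c d Txy.
by have := Rabs_pos d; split_Rabs; nra.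
Qed.

Lemma fixed_point_unique f1 f2 K : (forall y, D y -> Rabs (f1 y - f2 y) <= K) ->
  (forall y, D y -> f1 y = T f1 y) -> (forall y, D y -> f2 y = T f2 y) ->
  forall y, D y -> f1 y = f2 y.
Proof.
move=> f12K f1T f2T.
have dist n y : D y -> Rabs (f1 y - f2 y) <= g ^ n * K.
  elim: n y => [|n IHn] y Dy; first by rewrite /= Rmult_1_l; apply: f12K.
  have [x Dx Txy] := T_contr f1 f2 Dy.
  rewrite f1T // f2T //; apply: Rle_trans Txy _; rewrite /= Rmult_assoc.
  by apply: Rmult_le_compat_l; [lra | apply: IHn].
move=> y Dy; apply: cond_eq => eps eps_gt0.
have [N gN] := pow_mul_small K g01 eps_gt0.
by apply: Rle_lt_trans (dist N y Dy) (gN N (leqnn N)).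
Qed.

End ContractionIteration.

Section Partition.
Variables (M : nat) (x : nat -> R).
Hypothesis x0 : x 0%N = 0.
Hypothesis xM : x M = 1.
Hypothesis x_incr : forall n, (n < M)%N -> x n < x n.+1.

Lemma partition_le n m : (n <= m)%N -> (m <= M)%N -> x n <= x m.
Proof.
move=> /subnKC <-; elim: (m - n)%N => [|d IHd]; first by rewrite addn0; lra.
rewrite addnS => ndM; apply: Rle_trans (IHd (ltnW ndM)) _.
exact/Rlt_le/x_incr.
Qed.

Lemma partition_lt n m : (n < m)%N -> (m <= M)%N -> x n < x m.
Proof.
move=> nm mM; apply: (Rlt_le_trans _ (x n.+1)); last exact: partition_le.
exact/x_incr/(leq_trans nm).
Qed.

Lemma partition_in01 n : (n <= M)%N -> inI (x n).
Proof. by move=> nM; rewrite /inI -x0 -xM; split; apply: partition_le. Qed.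

Lemma cell_exists t : (0 < M)%N -> inI t ->
  exists2 i, (1 <= i <= M)%N & x i.-1 <= t <= x i.
Proof.
move=> M_gt0 [t_ge0 t_le1].
suff: forall n, (1 <= n <= M)%N -> t <= x n ->
    exists2 i, (1 <= i <= M)%N & x i.-1 <= t <= x i.
  by move/(_ M); apply; rewrite ?M_gt0 ?leqnn ?xM.
elim=> [//|[|n] IHn] /andP[_ nM] tn; first by exists 1%N; rewrite ?M_gt0 //= x0.
case: (Rle_lt_dec t (x n.+1)) => [tn1 | tn1]; first by apply: IHn; rewrite //= ltnW.
by exists n.+2; rewrite ?nM //=; lra.
Qed.

Lemma cells_near t : exists2 d, 0 < d & forall s i, Rabs (s - t) < d ->
  (1 <= i <= M)%N -> x i.-1 <= s <= x i -> x i.-1 <= t <= x i.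
Proof.
have [d d_gt0 d_sep] : exists2 d, 0 < d &
    forall n : 'I_M.+1, x n <> t -> d <= Rabs (x n - t).
  apply: (@common_delta_fin _ (fun (n : 'I_M.+1) d => x n <> t -> d <= Rabs (x n - t))).
    by move=> n d d' dd' xd /xd; lra.
  move=> n; case: (classic (x n = t)) => [xt | /Rminus_eq_contra xt].
    by exists 1; [lra | move=> /(_ xt)].
  by exists (Rabs (x n - t)); [apply: Rabs_pos_lt | lra].
exists d => // s i st /andP[i_ge1 iM] [xs sx].
have := d_sep (inord i.-1); have := d_sep (inord i).
rewrite !inordK ?ltnS // ?(leq_trans (leq_pred i)) // => di di1.
split; apply: Rnot_lt_le => xt.
  by have := di1 ltac:(lra); move: st; split_Rabs; lra.
by have := di ltac:(lra); move: st; split_Rabs; lra.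
Qed.

Definition vertex_end j := if odd j then M else 0%N.

Lemma vertex_end_le j : (vertex_end j <= M)%N.
Proof. by rewrite /vertex_end; case: odd. Qed.

Lemma vertex_end_idem j :
  vertex_end (vertex_end (vertex_end j)) = vertex_end (vertex_end j).
Proof. by rewrite /vertex_end; case: (odd j); case oddM: (odd M); rewrite /= ?oddM. Qed.

Variable u : nat -> R -> R.
Hypothesis u_homeo : forall i, (1 <= i <= M)%N -> homeo_onto (u i) (x i.-1) (x i).
Hypothesis u_odd : forall i, (1 <= i <= M)%N -> odd i -> u i 0 = x i.-1 /\ u i 1 = x i.
Hypothesis u_even : forall i, (1 <= i <= M)%N -> ~~ odd i ->
  u i 0 = x i /\ u i 1 = x i.-1.

Lemma u_in_cell i t : (1 <= i <= M)%N -> inI t -> x i.-1 <= u i t <= x i.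
Proof. by move=> /u_homeo[_ [v [uv _]]] /uv[]. Qed.

Lemma u_inj i s s' : (1 <= i <= M)%N -> inI s -> inI s' -> u i s = u i s' -> s = s'.
Proof.
move=> /u_homeo[_ [v [uv _]]] /uv[_ vs] /uv[_ vs'] us.
by rewrite -vs -vs' us.
Qed.

Definition preim i t := epsilon (inhabits 0) (fun s => inI s /\ u i s = t).

Lemma preim_spec i t : (1 <= i <= M)%N -> x i.-1 <= t <= x i ->
  inI (preim i t) /\ u i (preim i t) = t.
Proof.
move=> /u_homeo[_ [v [_ [vu _]]]] /vu vt.
by apply: (epsilon_spec (inhabits 0) (fun s => inI s /\ u i s = t)); exists (v t).
Qed.

Lemma preim_cont i t : (1 <= i <= M)%N -> x i.-1 <= t <= x i ->
  forall eps, 0 < eps -> exists2 d, 0 < d & forall s, x i.-1 <= s <= x i ->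
    Rabs (s - t) < d -> Rabs (preim i s - preim i t) < eps.
Proof.
move=> Ri ti eps eps_gt0; have /u_homeo[_ [v [_ [vu v_cont]]]] := Ri.
have preim_v s : x i.-1 <= s <= x i -> preim i s = v s.
  move=> si; have [Ip up] := preim_spec Ri si; have [Iv uv] := vu s si.
  by apply: (u_inj Ri) => //; rewrite up uv.
have [d [d_gt0 vd]] := v_cont t ti eps eps_gt0.
by exists d => // s si st; rewrite !preim_v //; apply: vd.
Qed.

(* By parity, both preimages are [1] ([a] odd) or both are [0] ([a] even). *)
Lemma u_shared_endpoint a s s' : (1 <= a)%N -> (a < M)%N -> inI s -> inI s' ->
  u a s = x a -> u a.+1 s' = x a -> s = s'.
Proof.
move=> a_ge1 aM Is Is' uas uas'.
have Ra : (1 <= a <= M)%N by rewrite a_ge1 ltnW.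
have Ra1 : (1 <= a.+1 <= M)%N by rewrite aM.
have I0 : inI 0 by rewrite /inI; lra.
have I1 : inI 1 by rewrite /inI; lra.
case odd_a: (odd a).
- have [_ ua1] := u_odd Ra odd_a.
  have [_ ua10] := u_even Ra1 ltac:(by rewrite /= odd_a).
  have -> : s = 1 by apply: (u_inj Ra) => //; rewrite uas ua1.
  by apply: (u_inj Ra1) => //; rewrite uas' ua10.
- have [ua0 _] := u_even Ra ltac:(by rewrite odd_a).
  have [ua10 _] := u_odd Ra1 ltac:(by rewrite /= odd_a).
  have -> : s = 0 by apply: (u_inj Ra) => //; rewrite uas ua0.
  by apply: (u_inj Ra1) => //; rewrite uas' ua10.
Qed.

Definition glued a b t :=
  a = b \/ (b = a.+1 /\ u a t = x a) \/ (a = b.+1 /\ u b t = x b).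

Lemma u_eq_glued a b s s' : (1 <= a <= M)%N -> (1 <= b <= M)%N ->
  inI s -> inI s' -> u a s = u b s' -> s = s' /\ glued a b s.
Proof.
move=> Ra Rb Is Is' uab.
have [ua1 ua2] := u_in_cell Ra Is; have [ub1 ub2] := u_in_cell Rb Is'.
have adj c d t : (1 <= c <= M)%N -> (1 <= d <= M)%N -> (c < d)%N ->
    t <= x c -> x d.-1 <= t -> d = c.+1 /\ t = x c.
  move=> /andP[c_ge1 _] /andP[_ dM] cd tc.
  case: (ltngtP d c.+1) => [dc | dc | ->] dt; first by move: dc; rewrite ltnS leqNgt cd.
    have : x c < x d.-1; last lra.
    by apply: partition_lt; rewrite ?(leq_trans (leq_pred d)) // -ltnS prednK
      // (leq_ltn_trans _ cd).
  by split=> //; move: dt => /=; lra.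
rewrite /glued; case: (ltngtP a b) => [ab | ba | eab].
- have [eb uax] := adj _ _ _ Ra Rb ab ua2 ltac:(by rewrite uab).
  subst b; case/andP: Ra => a_ge1 _; case/andP: Rb => _ aM.
  have ss' : s = s' by apply: (u_shared_endpoint a_ge1 aM Is Is' uax); rewrite -uab.
  by subst s'; split=> //; right; left.
- have [ea ubx] := adj _ _ _ Rb Ra ba ub2 ltac:(by rewrite -uab).
  subst a; case/andP: Rb => b_ge1 _; case/andP: Ra => _ bM.
  have ss' : s = s'.
    by symmetry; apply: (u_shared_endpoint b_ge1 bM Is' Is ubx); rewrite uab.
  by subst s'; split=> //; right; right.
- by subst b; split; [apply: (u_inj Ra) | left].
Qed.

Definition vertex_cell j := if j == 0%N then 1%N else j.

Lemma vertex_image j : (0 < M)%N -> (j <= M)%N ->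
  [/\ (1 <= vertex_cell j <= M)%N, x j = u (vertex_cell j) (x (vertex_end j))
    & eta (vertex_cell j) (vertex_end j) = j].
Proof.
move=> M_gt0 jM; rewrite /vertex_cell /vertex_end /eta.
have [-> | j_neq0] := eqVneq j 0%N.
  by split; rewrite ?M_gt0 //= x0; have [-> _] := u_odd (i := 1) ltac:(by rewrite M_gt0) isT.
have Rj : (1 <= j <= M)%N by rewrite lt0n j_neq0 jM.
case odd_j: (odd j); split=> //.
- by rewrite xM; have [_ ->] := u_odd Rj odd_j.
- by rewrite (negbTE (lt0n_neq0 M_gt0)).
- by rewrite x0; have [-> _] := u_even Rj ltac:(by rewrite odd_j).
Qed.

End Partition.

Section GraphAttractor.
Variables (q : nat) (M : 'I_q -> nat) (xg : 'I_q -> nat -> R)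
  (z : ('I_q -> nat) -> R) (u : 'I_q -> nat -> R -> R)
  (F : ('I_q -> nat) -> ('I_q -> R) -> R -> R).
Hypothesis M_gt0 : forall k, (0 < M k)%N.
Hypothesis hx0 : forall k, xg k 0%N = 0.
Hypothesis hxM : forall k, xg k (M k) = 1.
Hypothesis hxinc : forall k n, (n < M k)%N -> xg k n < xg k n.+1.
Hypothesis hu_homeo : forall k i, (1 <= i <= M k)%N ->
  homeo_onto (u k i) (xg k i.-1) (xg k i).
Hypothesis hu_odd : forall k i, (1 <= i <= M k)%N -> odd i ->
  u k i 0 = xg k i.-1 /\ u k i 1 = xg k i.
Hypothesis hu_even : forall k i, (1 <= i <= M k)%N -> ~~ odd i ->
  u k i 0 = xg k i /\ u k i 1 = xg k i.-1.
Hypothesis hF_cont : forall i, idx_range M i -> cont_IqR (F i).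
Hypothesis hF_vert : forall i, idx_range M i ->
  forall kk : 'I_q -> nat, (forall j, kk j = 0%N \/ kk j = M j) ->
    F i (grid xg kk) (z kk) = z (fun j => eta (i j) (kk j)).
Hypothesis hF_contr : forall i, idx_range M i ->
  exists gamma, 0 < gamma < 1 /\ forall x, inIq x -> forall z1 z2 : R,
    Rabs (F i x z1 - F i x z2) <= gamma * Rabs (z1 - z2).
Hypothesis hF_match : forall (k : 'I_q) i, idx_range M i -> (i k < M k)%N ->
  forall xstar, inI xstar -> u k (i k) xstar = xg k (i k) ->
  forall x, inIq x -> forall w : R,
    F i (upd x k xstar) w = F (updn i k (i k).+1) (upd x k xstar) w.

Lemma inIq_image i x y : idx_range M i -> inIq x ->
  (forall k, y k = u k (i k) (x k)) -> inIq y.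
Proof.
move=> Ri Ix yx k; rewrite yx.
have /andP[_ ikM] := Ri k.
have [ux1 ux2] := u_in_cell (hu_homeo (k := k)) (Ri k) (Ix k).
have := partition_in01 (hx0 k) (hxM k) (hxinc (k := k)) ikM.
have := partition_in01 (hx0 k) (hxM k) (hxinc (k := k)) (leq_trans (leq_pred _) ikM).
rewrite /inI; lra.
Qed.

Lemma upd_id (x : 'I_q -> R) k : upd x k (x k) = x.
Proof. by apply: functional_extensionality => j; rewrite /upd; case: eqP => // ->. Qed.

Lemma F_update_glued i k a x w : idx_range M i -> (1 <= a <= M k)%N -> inIq x ->
  glued (xg k) (u k) (i k) a (x k) -> F i x w = F (updn i k a) x w.
Proof.
move=> Ri Ra Ix [ika | [[ea uxk] | [ika uxk]]].
- congr F; apply: functional_extensionality => j.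
  by rewrite /updn; case: eqP => // ->.
- subst a; have ikM : (i k < M k)%N by case/andP: Ra.
  by have := hF_match Ri ikM (Ix k) uxk Ix w; rewrite upd_id.
- pose i' := updn i k a.
  have Ri' : idx_range M i'.
    by move=> j; rewrite /i' /updn; case: eqP => [-> | _]; [apply: Ra | apply: Ri].
  have i'k : i' k = a by rewrite /i' /updn eqxx.
  have aM : (i' k < M k)%N by rewrite i'k -ika; case/andP: (Ri k).
  have := hF_match Ri' aM (Ix k) ltac:(by rewrite i'k) Ix w; rewrite upd_id => ->.
  congr F; apply: functional_extensionality => j.
  by rewrite /updn i'k /i' /updn; case: eqP => [-> |].
Qed.

Lemma F_glued i i' x w : idx_range M i -> idx_range M i' -> inIq x ->
  (forall k, glued (xg k) (u k) (i k) (i' k) (x k)) -> F i x w = F i' x w.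
Proof.
move=> Ri Ri' Ix.
have i_out k : k \notin enum 'I_q -> i k = i' k by rewrite mem_enum.
elim: (enum 'I_q) i Ri i_out => [|k s IHs] i Ri i_out i_glued.
  by congr F; apply: functional_extensionality => k; apply: i_out.
rewrite (F_update_glued w Ri (Ri' k) Ix (i_glued k)).
apply: IHs => j; rewrite /updn.
- by case: eqP => [-> | _]; [apply: Ri' | apply: Ri].
- by case: eqP => [-> // | /eqP jk js]; apply: i_out; rewrite in_cons negb_or jk js.
- by case: eqP => [-> | _]; [left | apply: i_glued].
Qed.

Lemma F_agree (f : ('I_q -> R) -> R) i x i' x' :
  idx_range M i -> idx_range M i' -> inIq x -> inIq x' ->
  (forall k, u k (i k) (x k) = u k (i' k) (x' k)) -> F i x (f x) = F i' x' (f x').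
Proof.
move=> Ri Ri' Ix Ix' uxx'.
have glue k := u_eq_glued (hxinc (k := k)) (hu_homeo (k := k)) (hu_odd (k := k))
  (hu_even (k := k)) (Ri k) (Ri' k) (Ix k) (Ix' k) (uxx' k).
have xx' : x = x' by apply: functional_extensionality => k; case: (glue k).
by subst x'; apply: F_glued => // k; case: (glue k).
Qed.


Definition cell_of (y : 'I_q -> R) : 'I_q -> nat := fun k =>
  epsilon (inhabits 1%N) (fun i => (1 <= i <= M k)%N /\ xg k i.-1 <= y k <= xg k i).

Definition in_cell (i : 'I_q -> nat) (y : 'I_q -> R) :=
  forall k, xg k (i k).-1 <= y k <= xg k (i k).

Definition preim_pt (i : 'I_q -> nat) (y : 'I_q -> R) : 'I_q -> R :=
  fun k => preim (u k) (i k) (y k).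

(* The Read-Bajraktarevic operator; by [graph_invariant_iff_fixed] below its
   fixed points are exactly the functions whose graph [H] satisfies
   [H = \bigcup_i Omega_i(H)]. *)
Definition RB (f : ('I_q -> R) -> R) (y : 'I_q -> R) : R :=
  F (cell_of y) (preim_pt (cell_of y) y) (f (preim_pt (cell_of y) y)).

Lemma cell_of_spec y : inIq y -> idx_range M (cell_of y) /\ in_cell (cell_of y) y.
Proof.
move=> Iy; suff cy k : (1 <= cell_of y k <= M k)%N /\
    xg k (cell_of y k).-1 <= y k <= xg k (cell_of y k).
  by split=> k; case: (cy k).
apply: (epsilon_spec (inhabits 1%N)
  (fun i => (1 <= i <= M k)%N /\ xg k i.-1 <= y k <= xg k i)).
by have [i Ri yi] := cell_exists (hx0 k) (hxM k) (M_gt0 k) (Iy k); exists i.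
Qed.

Lemma preim_pt_spec i y : idx_range M i -> in_cell i y ->
  inIq (preim_pt i y) /\ forall k, u k (i k) (preim_pt i y k) = y k.
Proof.
by move=> Ri yi; split=> k; case: (preim_spec (hu_homeo (k := k)) (Ri k) (yi k)).
Qed.

Lemma RB_eq f y i x : idx_range M i -> inIq x ->
  (forall k, y k = u k (i k) (x k)) -> RB f y = F i x (f x).
Proof.
move=> Ri Ix yx; have [Rc yc] := cell_of_spec (inIq_image Ri Ix yx).
have [Ip up] := preim_pt_spec Rc yc.
by apply: F_agree => // k; rewrite up yx.
Qed.

Lemma F_unif_contr : exists2 g, 0 <= g < 1 & forall i, idx_range M i ->
  forall x, inIq x -> forall w1 w2, Rabs (F i x w1 - F i x w2) <= g * Rabs (w1 - w2).
Proof.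
pose P i d := d <= 1 /\ forall x, inIq x -> forall w1 w2,
  Rabs (F i x w1 - F i x w2) <= (1 - d) * Rabs (w1 - w2).
have [d d_gt0 Pd] : exists2 d, 0 < d & forall i, idx_range M i -> P i d.
  apply: (@common_delta_idx _ M P) => [i d d' dd' [d1 Fd] | i Ri].
    split=> [|x Ix w1 w2]; first lra.
    apply: Rle_trans (Fd x Ix w1 w2) _.
    by apply: Rmult_le_compat_r; [apply: Rabs_pos | lra].
  have [g [g01 Fg]] := hF_contr Ri.
  exists (1 - g); first lra.
  by split=> [|x Ix w1 w2]; [lra | rewrite (_ : 1 - (1 - g) = g); [apply: Fg | ring]].
have [d_le1 _] := Pd (fun _ => 1%N) (fun k => M_gt0 k).
by exists (1 - d); [lra | move=> i /Pd[]].
Qed.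

Lemma RB_contr g : (forall i, idx_range M i -> forall x, inIq x ->
    forall w1 w2, Rabs (F i x w1 - F i x w2) <= g * Rabs (w1 - w2)) ->
  forall f1 f2 y, inIq y ->
    exists2 x, inIq x & Rabs (RB f1 y - RB f2 y) <= g * Rabs (f1 x - f2 x).
Proof.
move=> Fg f1 f2 y Iy; have [Rc yc] := cell_of_spec Iy.
by have [Ip _] := preim_pt_spec Rc yc; exists (preim_pt (cell_of y) y); last apply: Fg.
Qed.

Lemma F_preim_cont f i y : cont_Iq f -> idx_range M i -> in_cell i y ->
  forall eps, 0 < eps -> exists2 d, 0 < d & forall y', in_cell i y' ->
    (forall k, Rabs (y' k - y k) < d) ->
    Rabs (F i (preim_pt i y') (f (preim_pt i y')) -
          F i (preim_pt i y) (f (preim_pt i y))) < eps.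
Proof.
move=> f_cont Ri yi eps eps_gt0; have [Ip _] := preim_pt_spec Ri yi.
have [d1 [d1_gt0 Fd1]] := hF_cont Ri (f (preim_pt i y)) Ip eps_gt0.
have [d2 [d2_gt0 fd2]] := f_cont _ Ip d1 d1_gt0.
have [d d_gt0 pd] : exists2 d, 0 < d & forall k t,
    xg k (i k).-1 <= t <= xg k (i k) -> Rabs (t - y k) < d ->
    Rabs (preim (u k) (i k) t - preim (u k) (i k) (y k)) < Rmin d1 d2.
  apply: common_delta_fin => [k d d' dd' pd t ti td | k]; first by apply: pd; lra.
  exact: (preim_cont (hu_homeo (k := k)) (Ri k) (yi k) (Rmin_pos _ _ d1_gt0 d2_gt0)).
exists d => // y' y'i y'y; have [Ip' _] := preim_pt_spec Ri y'i.
have p_close k := pd k _ (y'i k) (y'y k).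
have := Rmin_l d1 d2; have := Rmin_r d1 d2 => d12 d11.
apply: Fd1 => // [k|]; first by have := p_close k; rewrite /preim_pt; lra.
by apply: fd2 => // k; have := p_close k; rewrite /preim_pt; lra.
Qed.

Lemma RB_cont f : cont_Iq f -> cont_Iq (RB f).
Proof.
move=> f_cont y Iy eps eps_gt0.
have [d1 d1_gt0 near] : exists2 d, 0 < d & forall k s j, Rabs (s - y k) < d ->
    (1 <= j <= M k)%N -> xg k j.-1 <= s <= xg k j -> xg k j.-1 <= y k <= xg k j.
  apply: common_delta_fin => [k d d' dd' Pd s j sd | k]; first by apply: Pd; lra.
  exact: cells_near.
have [d2 d2_gt0 piece] : exists2 d, 0 < d & forall i, idx_range M i -> in_cell i y ->
    forall y', in_cell i y' -> (forall k, Rabs (y' k - y k) < d) ->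
    Rabs (F i (preim_pt i y') (f (preim_pt i y')) -
          F i (preim_pt i y) (f (preim_pt i y))) < eps.
  apply: common_delta_idx => [i d d' dd' Pd yi y' y'i y'd | i Ri].
    by apply: Pd => // k; have := y'd k; lra.
  case: (classic (in_cell i y)) => [yi | Nyi]; last by exists 1; [lra | move/Nyi].
  by have [d d_gt0 Pd] := F_preim_cont f_cont Ri yi eps_gt0; exists d.
exists (Rmin d1 d2); split=> [|y' Iy' y'y]; first exact: Rmin_pos.
have := Rmin_l d1 d2; have := Rmin_r d1 d2 => d12 d11.
have [Rc y'c] := cell_of_spec Iy'.
have yc : in_cell (cell_of y') y.
  by move=> k; apply: (near k (y' k)) (Rc k) (y'c k); have := y'y k; lra.
have [Ip up] := preim_pt_spec Rc yc.
rewrite (RB_eq f Rc Ip (y := y)); last by move=> k; symmetry; apply: up.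
by apply: piece => // k; have := y'y k; lra.
Qed.

Lemma RB_fixed_exists : exists A, cont_Iq A /\ forall y, inIq y -> A y = RB A y.
Proof.
have [g g01 Fg] := F_unif_contr.
have iter_cont n : cont_Iq (iter n RB (fun _ => 0)).
  elim: n => [|n IHn]; last exact: RB_cont.
  move=> y _ eps eps_gt0; exists 1; split=> [|y' _ _]; first lra.
  by rewrite /= Rminus_0_r Rabs_R0.
have [B RB0_B] := cont_Iq_bounded (iter_cont 1%N).
have [A [A_fix A_dist]] := iter_fixed_point g01 (RB_contr Fg)
  (f0 := fun _ => 0) (B := B) (fun y Iy => ltac:(rewrite Rminus_0_r; exact: RB0_B)).
exists A; split=> //; apply: (cont_Iq_unif_limit iter_cont) => eps eps_gt0.
have [N gN] := pow_mul_small (B / (1 - g)) g01 eps_gt0.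
by exists N => y Iy; apply: Rle_lt_trans (A_dist N y Iy) (gN N (leqnn N)).
Qed.

Lemma graph_invariant_iff_fixed f :
  (forall y w, (inIq y /\ w = f y) <->
    exists i x, idx_range M i /\ inIq x /\
      (forall k, y k = u k (i k) (x k)) /\ w = F i x (f x)) <->
  (forall y, inIq y -> f y = RB f y).
Proof.
split=> [graph y Iy | f_fix y w].
  have [i [x [Ri [Ix [yx ->]]]]] := (graph y (f y)).1 (conj Iy erefl).
  by rewrite (RB_eq f Ri Ix yx).
split=> [[Iy ->] | [i [x [Ri [Ix [yx ->]]]]]].
  have [Rc yc] := cell_of_spec Iy; have [Ip up] := preim_pt_spec Rc yc.
  by exists (cell_of y), (preim_pt (cell_of y) y); do !split=> //; apply: f_fix.
have Iy := inIq_image Ri Ix yx.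
by split=> //; rewrite (f_fix y Iy) (RB_eq f Ri Ix yx).
Qed.

(* Each vertex [j] is the image under [Omega_(vertex_cell j)] of the corner
   [vertex_end j], so the interpolation error at [j] is at most [g] times the
   error at [vertex_end j]; and [vertex_end] is idempotent after two steps. *)
Lemma RB_fixed_grid f : (forall y, inIq y -> f y = RB f y) ->
  forall j, (forall k, (j k <= M k)%N) -> f (grid xg j) = z j.
Proof.
move=> f_fix.
have [g g01 Fg] := F_unif_contr.
pose V j k := vertex_end (M k) (j k).
have V_le j k : (V j k <= M k)%N by apply: vertex_end_le.
have err_step j : (forall k, (j k <= M k)%N) ->
    Rabs (f (grid xg j) - z j) <= g * Rabs (f (grid xg (V j)) - z (V j)).
  move=> jM; pose C k := vertex_cell (j k).
  have vj k := vertex_image (hx0 k) (hxM k) (hu_odd (k := k)) (hu_even (k := k))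
    (M_gt0 k) (jM k).
  have RC : idx_range M C by move=> k; case: (vj k).
  have IV : inIq (grid xg (V j)).
    by move=> k; exact: (partition_in01 (hx0 k) (hxM k) (hxinc (k := k)) (V_le j k)).
  have gridV k : grid xg j k = u k (C k) (grid xg (V j) k) by case: (vj k).
  have -> : z j = F C (grid xg (V j)) (z (V j)).
    rewrite hF_vert // => [|k]; last by rewrite /V /vertex_end; case: odd; [right | left].
    by congr z; apply: functional_extensionality => k; case: (vj k).
  rewrite f_fix; last exact: (inIq_image RC IV gridV).
  by rewrite (RB_eq f RC IV gridV); apply: Fg.
have err_zero j : (forall k, (j k <= M k)%N) ->
    f (grid xg (V j)) = z (V j) -> f (grid xg j) = z j.
  move=> jM eV; have := err_step j jM; rewrite eV Rminus_diag Rabs_R0 Rmult_0_r => e.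
  by apply: cond_eq => eps eps_gt0; lra.
have fixed_corner c : (forall k, (c k <= M k)%N) -> V c = c -> f (grid xg c) = z c.
  move=> cM Vc; apply: cond_eq => eps eps_gt0.
  have := err_step c cM; rewrite Vc; have := Rabs_pos (f (grid xg c) - z c).
  by move: (Rabs _) => e; case: g01; nra.
move=> j jM; apply: (err_zero _ jM); apply: (err_zero _ (V_le j)).
apply: fixed_corner (V_le _) _.
by apply: functional_extensionality => k; apply: vertex_end_idem.
Qed.

Lemma RB_fixed_unique f1 f2 : cont_Iq f1 -> cont_Iq f2 ->
  (forall y, inIq y -> f1 y = RB f1 y) -> (forall y, inIq y -> f2 y = RB f2 y) ->
  forall y, inIq y -> f1 y = f2 y.
Proof.
move=> f1_cont f2_cont f1_fix f2_fix.
have [g g01 Fg] := F_unif_contr.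
have [K1 f1K] := cont_Iq_bounded f1_cont; have [K2 f2K] := cont_Iq_bounded f2_cont.
apply: (fixed_point_unique g01 (RB_contr Fg) (K := K1 + K2)) => // y Iy.
have := f1K y Iy; have := f2K y Iy.
by move: (f1 y) (f2 y) => a b; split_Rabs; lra.
Qed.

End GraphAttractor.

Theorem theorem3p1
  (q : nat) (hq : (1 <= q)%N)
  (M : 'I_q -> nat) (hM : forall k, (2 <= M k)%N)
  (xg : 'I_q -> nat -> R)
  (hx0 : forall k, xg k 0%N = 0)
  (hxM : forall k, xg k (M k) = 1)
  (hxinc : forall k n, (n < M k)%N -> xg k n < xg k n.+1)
  (z : ('I_q -> nat) -> R)
  (u : 'I_q -> nat -> R -> R)
  (hu_homeo : forall k i, (1 <= i <= M k)%N ->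
      homeo_onto (u k i) (xg k i.-1) (xg k i))
  (hu_contr : forall k i, (1 <= i <= M k)%N -> contraction_on_I (u k i))
  (hu_odd : forall k i, (1 <= i <= M k)%N -> odd i ->
      u k i 0 = xg k i.-1 /\ u k i 1 = xg k i)
  (hu_even : forall k i, (1 <= i <= M k)%N -> ~~ odd i ->
      u k i 0 = xg k i /\ u k i 1 = xg k i.-1)
  (F : ('I_q -> nat) -> ('I_q -> R) -> R -> R)
  (hF_cont : forall i, idx_range M i -> cont_IqR (F i))
  (hF_vert : forall i, idx_range M i ->
      forall kk : 'I_q -> nat, (forall j, kk j = 0%N \/ kk j = M j) ->
        F i (grid xg kk) (z kk) = z (fun j => eta (i j) (kk j)))
  (hF_contr : forall i, idx_range M i ->
      exists gamma, 0 < gamma < 1 /\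
        forall x, inIq x -> forall z1 z2 : R,
          Rabs (F i x z1 - F i x z2) <= gamma * Rabs (z1 - z2))
  (hF_match : forall (k : 'I_q) i, idx_range M i -> (i k < M k)%N ->
      forall xstar, inI xstar -> u k (i k) xstar = xg k (i k) ->
      forall x, inIq x -> forall w : R,
        F i (upd x k xstar) w = F (updn i k (i k).+1) (upd x k xstar) w) :
  exists A : ('I_q -> R) -> R,
    cont_Iq A /\
    (forall (y : 'I_q -> R) (w : R),
       (inIq y /\ w = A y) <->
       (exists i x, idx_range M i /\ inIq x /\
          (forall k, y k = u k (i k) (x k)) /\ w = F i x (A x))) /\
    (forall j : 'I_q -> nat, (forall k, (j k <= M k)%N) -> A (grid xg j) = z j) /\
    (forall B : ('I_q -> R) -> R,
       cont_Iq B ->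
       (forall (y : 'I_q -> R) (w : R),
          (inIq y /\ w = B y) <->
          (exists i x, idx_range M i /\ inIq x /\
             (forall k, y k = u k (i k) (x k)) /\ w = F i x (B x))) ->
       forall x, inIq x -> B x = A x).
Proof.
have M_gt0 k : (0 < M k)%N := ltnW (hM k).
have graph_fix f := graph_invariant_iff_fixed M_gt0 hx0 hxM hxinc hu_homeo hu_odd
  hu_even hF_match f.
have [A [A_cont A_fix]] := RB_fixed_exists M_gt0 hx0 hxM hxinc hu_homeo hu_odd
  hu_even hF_cont hF_contr hF_match.
exists A; split=> //; split; first exact/graph_fix.
split.
  exact: (RB_fixed_grid M_gt0 hx0 hxM hxinc hu_homeo hu_odd hu_even hF_vert hF_contr
    hF_match A_fix).
move=> B B_cont /graph_fix B_fix x Ix.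
exact: (RB_fixed_unique M_gt0 hx0 hxM hu_homeo hF_contr B_cont A_cont B_fix A_fix Ix).
Qed.
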